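(* Let $p_\theta(x,z)$ be a joint probability density on $\mathcal{X}\times\mathcal{Z}$ with marginals $p_\theta(x)$, $p_\theta(z)$ and conditionals $p_\theta(x\mid z)$, $p_\theta(z\mid x)$. Let $p_{\mathrm{data}}(x)$ be a probability density on $\mathcal{X}$ and $q_\phi(z\mid x)$ a conditional density on $\mathcal{Z}$ for each $x$; set $q_\phi(x,z)=p_{\mathrm{data}}(x)\,q_\phi(z\mid x)$, $q_\phi(z)=\int p_{\mathrm{data}}(x)q_\phi(z\mid x)\,\mathrm{d}x$ and $q_\phi(x\mid z)=q_\phi(x,z)/q_\phi(z)$. Consider the three conditions (L) Likelihood Consistency: $p_\theta(x\mid z)=q_\phi(x\mid z)$ for all $x,z$; (P) Prior Consistency: $p_\theta(z)=q_\phi(z)$ for all $z$; (Q) Posterior Consistency: $p_\theta(z\mid x)=q_\phi(z\mid x)$ for all $x,z$. Then: 1. If (L) and (P) hold, then (Q) holds and $p_\theta(x)=p_{\mathrm{data}}(x)$. 2. If (L) and (Q) hold, then (P) holds and $p_\theta(x)=p_{\mathrm{data}}(x)$. 3. If (Q) and (P) hold and the family $\{q_\phi(x\mid z)\}_z$ is complete, then $p_\theta(x)=p_{\mathrm{data}}(x)$ (almost everywhere) and (L) holds.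
   Context: All densities are assumed strictly positive so that conditionals and ratios are defined. The family $\{q_\phi(\cdot\mid z)\}_{z\in\mathcal{Z}}$ is called complete if for every measurable $g$ on $\mathcal{X}$ that is integrable under each $q_\phi(\cdot\mid z)$, $\mathbb{E}_{x\sim q_\phi(x\mid z)}[g(x)]=0$ for all $z$ implies $g=0$ almost everywhere. *)

From HB Require Import structures.
From mathcomp Require Import all_boot all_order all_algebra.
From mathcomp Require Import all_classical all_reals all_analysis.
Set Implicit Arguments. Unset Strict Implicit. Unset Printing Implicit Defensive.
Import Order.TTheory GRing.Theory Num.Theory.
Local Open Scope classical_set_scope.
Local Open Scope ring_scope.

(* A joint density p is written as a curried function p x z = p(x,z);
   q x z stands for the conditional density q_phi(z | x). *)
Section Densities.
Context {R : realType} {dX dZ : measure_display}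
  {X : measurableType dX} {Z : measurableType dZ}.

Definition marg_x (muZ : set Z -> \bar R) (p : X -> Z -> R) (x : X) : R :=
  fine (\int[muZ]_z (p x z)%:E).
Definition marg_z (muX : set X -> \bar R) (p : X -> Z -> R) (z : Z) : R :=
  fine (\int[muX]_x (p x z)%:E).
Definition cond_z_given_x (muZ : set Z -> \bar R) (p : X -> Z -> R) (x : X) (z : Z) : R :=
  p x z / marg_x muZ p x.
Definition cond_x_given_z (muX : set X -> \bar R) (p : X -> Z -> R) (x : X) (z : Z) : R :=
  p x z / marg_z muX p z.

Definition q_joint (pdata : X -> R) (q : X -> Z -> R) (x : X) (z : Z) : R :=
  pdata x * q x z.
Definition q_z (muX : set X -> \bar R) (pdata : X -> R) (q : X -> Z -> R) (z : Z) : R :=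
  marg_z muX (q_joint pdata q) z.
Definition q_x_given_z (muX : set X -> \bar R) (pdata : X -> R) (q : X -> Z -> R)
  (x : X) (z : Z) : R :=
  q_joint pdata q x z / q_z muX pdata q z.

Definition likelihood_consistency (muX : set X -> \bar R) (p : X -> Z -> R)
  (pdata : X -> R) (q : X -> Z -> R) : Prop :=
  forall x z, cond_x_given_z muX p x z = q_x_given_z muX pdata q x z.
Definition prior_consistency (muX : set X -> \bar R) (p : X -> Z -> R)
  (pdata : X -> R) (q : X -> Z -> R) : Prop :=
  forall z, marg_z muX p z = q_z muX pdata q z.
Definition posterior_consistency (muZ : set Z -> \bar R) (p : X -> Z -> R)
  (q : X -> Z -> R) : Prop :=
  forall x z, cond_z_given_x muZ p x z = q x z.

Definition complete_family (muX : set X -> \bar R) (qc : X -> Z -> R) : Prop :=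
  forall g : X -> R, measurable_fun setT g ->
    (forall z, muX.-integrable setT (fun x => (g x * qc x z)%:E)) ->
    (forall z, (\int[muX]_x (g x * qc x z)%:E = 0)%E) ->
    {ae muX, forall x, g x = 0}.

End Densities.

From HB Require Import structures.
From mathcomp Require Import all_boot all_order all_algebra.
From mathcomp Require Import all_classical all_reals all_analysis.
From mathcomp Require Import measurable_realfun.
From mathcomp Require Import ring.
Import Order.TTheory GRing.Theory Num.Theory.
Local Open Scope classical_set_scope.
Local Open Scope ring_scope.

(** Parts 1 and 2 are pointwise algebra on the factorisations
    p(x,z) = p(x|z) p(z) and p(x,z) = p(x) p(z|x): (L) and (P) give
    p(x,z) = p_data(x) q(z|x), which integrates over z to p(x) = p_data(x);
    (L) and (Q) give p(x) q(z) = p_data(x) p(z), which integrates over x to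
    (P) because both p(x) and p_data are probability densities.  For part 3,
    (Q) and (P) say that g(x) = (p(x) - p_data(x)) / p_data(x) has mean zero
    under every q(.|z), since g(x) q(x|z) = (p(x,z) - q(x,z)) / q(z);
    completeness forces g = 0 almost everywhere, and then (L) follows from
    (Q) and (P) by Bayes' rule. *)

Section integral_facts.
Local Set Implicit Arguments.
Local Unset Strict Implicit.
Context d (T : measurableType d) (R : realType).
Context (mu : {measure set T -> \bar R}).

Lemma measure_setT_neq0 (h : T -> R) :
  measurable_fun setT h -> (\int[mu]_x (h x)%:E = 1)%E -> mu setT != 0%E.
Proof.
move=> mh h1; apply/eqP => mu0.
have := null_set_integral measurableT ((measurable_EFinP _ _).2 mh) mu0.
by rewrite h1 => -[] /eqP; rewrite oner_eq0.
Qed.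

Lemma integrable_fineK (f : T -> R) : mu.-integrable setT (fun x => (f x)%:E) ->
  (fine (\int[mu]_x (f x)%:E))%:E = (\int[mu]_x (f x)%:E)%E.
Proof. by move=> fint; rewrite fineK // (integrable_fin_num _ fint). Qed.

Lemma fine_integral_gt0 (f : T -> R) : mu setT != 0%E ->
  (forall x, 0 < f x) -> mu.-integrable setT (fun x => (f x)%:E) ->
  0 < fine (\int[mu]_x (f x)%:E).
Proof.
move=> mu_neq0 fgt0 fint; rewrite -lte_fin integrable_fineK // lt0e.
rewrite integral_ge0 ?andbT => [|x _]; last by rewrite lee_fin ltW.
apply: contra mu_neq0 => /eqP int0.
have mf := measurable_int mu fint.
have [|N [mN muN0 fN]] := (ae_eq_integral_abs mu measurableT mf).1.
  by rewrite -int0; apply: eq_integral => x _; rewrite gee0_abs // lee_fin ltW.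
rewrite eq_le measure_ge0 andbT -muN0 le_measure ?inE // => x _.
by apply: fN => /(_ I) /= /eqP; rewrite eqe gt_eqF.
Qed.

Lemma integral_density_scale (f : T -> R) (c : R) :
  measurable_fun setT f -> (forall x, 0 <= f x) ->
  (\int[mu]_x (f x)%:E = 1)%E -> 0 <= c -> (\int[mu]_x (c * f x)%:E = c%:E)%E.
Proof.
move=> mf fge0 f1 cge0; under eq_integral do rewrite EFinM.
rewrite ge0_integralZl_EFin //; last exact/measurable_EFinP.
  by rewrite f1 mule1.
by move=> x _; rewrite lee_fin.
Qed.

Lemma measurable_funV_ge0 (f : T -> R) : measurable_fun setT f ->
  (forall x, 0 <= f x) -> measurable_fun setT (fun x => (f x)^-1).
Proof.
move=> mf fge0; apply: (eq_measurable_fun ((@powR R)^~ (-1) \o f)).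
  by move=> x _ /=; rewrite powR_inv1.
by apply: measurableT_comp => //; exact: measurable_powR.
Qed.

End integral_facts.

Section densities.
Context (R : realType) (dX dZ : measure_display)
  (X : measurableType dX) (Z : measurableType dZ).
Variables (muX : {sigma_finite_measure set X -> \bar R})
  (muZ : {sigma_finite_measure set Z -> \bar R}).
Variables (p : X -> Z -> R) (pdata : X -> R) (q : X -> Z -> R).
Hypothesis mp : measurable_fun setT (fun xz : X * Z => p xz.1 xz.2).
Hypothesis p_gt0 : forall x z, 0 < p x z.
Hypothesis p_int1 : (\int[muX \x muZ]_xz (p xz.1 xz.2)%:E = 1)%E.
Hypothesis p_x_int : forall x, muZ.-integrable setT (fun z => (p x z)%:E).
Hypothesis p_z_int : forall z, muX.-integrable setT (fun x => (p x z)%:E).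
Hypothesis mpdata : measurable_fun setT pdata.
Hypothesis pdata_gt0 : forall x, 0 < pdata x.
Hypothesis pdata_int1 : (\int[muX]_x (pdata x)%:E = 1)%E.
Hypothesis mq : measurable_fun setT (fun xz : X * Z => q xz.1 xz.2).
Hypothesis q_gt0 : forall x z, 0 < q x z.
Hypothesis q_int1 : forall x, (\int[muZ]_z (q x z)%:E = 1)%E.
Hypothesis q_joint_int :
  forall z, muX.-integrable setT (fun x => (pdata x * q x z)%:E).

Let mq_x x : measurable_fun setT (q x).
Proof. exact: (measurable_fun_pair2 (f := fun xz => q xz.1 xz.2) x mq). Qed.

Let muX_neq0 : muX setT != 0%E.
Proof. exact: measure_setT_neq0 mpdata pdata_int1. Qed.

Lemma marg_x_gt0 x : 0 < marg_x muZ p x.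
Proof.
have muZ_neq0 := measure_setT_neq0 (mq_x x) (q_int1 x).
exact: fine_integral_gt0 muZ_neq0 (p_gt0 x) (p_x_int x).
Qed.

Lemma marg_z_gt0 z : 0 < marg_z muX p z.
Proof. exact: fine_integral_gt0 muX_neq0 (p_gt0^~ z) (p_z_int z). Qed.

Lemma q_z_gt0 z : 0 < q_z muX pdata q z.
Proof.
apply: fine_integral_gt0 muX_neq0 _ (q_joint_int z) => x.
exact: mulr_gt0.
Qed.

Lemma integral_marg_x x : (\int[muZ]_z (p x z)%:E = (marg_x muZ p x)%:E)%E.
Proof. by rewrite integrable_fineK. Qed.

Lemma integral_marg_z z : (\int[muX]_x (p x z)%:E = (marg_z muX p z)%:E)%E.
Proof. by rewrite integrable_fineK. Qed.

Lemma integral_q_z z :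
  (\int[muX]_x (pdata x * q x z)%:E = (q_z muX pdata q z)%:E)%E.
Proof. by rewrite /q_z /marg_z /q_joint integrable_fineK. Qed.

Let mpE : measurable_fun setT (EFin \o (fun xz : X * Z => p xz.1 xz.2)).
Proof. exact/measurable_EFinP. Qed.

Let pE_ge0 (xz : X * Z) : (0 <= (p xz.1 xz.2)%:E)%E.
Proof. by rewrite lee_fin ltW. Qed.

Lemma measurable_marg_x : measurable_fun setT (marg_x muZ p).
Proof.
apply/measurable_EFinP.
have := measurable_fun_fubini_tonelli_F (m2 := muZ) _ mpE pE_ge0.
apply: eq_measurable_fun.
by move=> x _; rewrite /fubini_F /= integral_marg_x.
Qed.

Lemma integral_marg_x1 : (\int[muX]_x (marg_x muZ p x)%:E = 1)%E.
Proof.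
rewrite -p_int1 (fubini_tonelli1 (m1 := muX) (m2 := muZ) _ mpE pE_ge0).
by apply: eq_integral => x _; rewrite /fubini_F /= integral_marg_x.
Qed.

Lemma posterior_consistency_factor : posterior_consistency muZ p q ->
  forall x z, p x z = marg_x muZ p x * q x z.
Proof.
move=> Q x z; rewrite -Q /cond_z_given_x mulrC divfK //.
exact: lt0r_neq0 (marg_x_gt0 x).
Qed.

Lemma factor_marg_x : (forall x z, p x z = pdata x * q x z) ->
  forall x, marg_x muZ p x = pdata x.
Proof.
move=> pE x; apply: EFin_inj; rewrite -integral_marg_x.
under eq_integral do rewrite pE.
by apply: integral_density_scale => // [z|]; rewrite ltW.
Qed.

Lemma factor_posterior_consistency : (forall x z, p x z = pdata x * q x z) ->
  posterior_consistency muZ p q.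
Proof.
move=> pE x z; rewrite /cond_z_given_x factor_marg_x // pE mulrC mulKf //.
exact: lt0r_neq0.
Qed.

Lemma likelihood_prior_factor :
  likelihood_consistency muX p pdata q -> prior_consistency muX p pdata q ->
  forall x z, p x z = pdata x * q x z.
Proof.
move=> L P x z; have := L x z.
rewrite /cond_x_given_z /q_x_given_z /q_joint -P.
by apply: divIf; exact: lt0r_neq0 (marg_z_gt0 z).
Qed.

Lemma likelihood_prior_consistency :
  likelihood_consistency muX p pdata q -> prior_consistency muX p pdata q ->
  posterior_consistency muZ p q /\ forall x, marg_x muZ p x = pdata x.
Proof.
move=> L P; have pE := likelihood_prior_factor L P.
by split; [exact: factor_posterior_consistency | exact: factor_marg_x].
Qed.

Lemma likelihood_posterior_cross :
  likelihood_consistency muX p pdata q -> posterior_consistency muZ p q ->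
  forall x z, marg_x muZ p x * q_z muX pdata q z = pdata x * marg_z muX p z.
Proof.
move=> L Q x z; have := L x z.
rewrite /cond_x_given_z /q_x_given_z /q_joint posterior_consistency_factor //.
move=> /eqP; rewrite eqr_div ?lt0r_neq0 ?marg_z_gt0 ?q_z_gt0 // => /eqP pq.
apply: (mulIf (lt0r_neq0 (q_gt0 x z))).
by rewrite mulrAC pq mulrAC.
Qed.

Lemma likelihood_posterior_prior_consistency :
  likelihood_consistency muX p pdata q -> posterior_consistency muZ p q ->
  prior_consistency muX p pdata q.
Proof.
move=> L Q z; apply: EFin_inj.
have <- : (\int[muX]_x (pdata x * marg_z muX p z)%:E = (marg_z muX p z)%:E)%E.
  under eq_integral do rewrite mulrC.
  by apply: integral_density_scale => // [x|]; rewrite ltW ?marg_z_gt0.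
under eq_integral do rewrite -likelihood_posterior_cross // mulrC.
apply: integral_density_scale; rewrite ?integral_marg_x1 ?ltW ?q_z_gt0 //.
- exact: measurable_marg_x.
- by move=> x; rewrite ltW ?marg_x_gt0.
Qed.

Lemma likelihood_posterior_consistency :
  likelihood_consistency muX p pdata q -> posterior_consistency muZ p q ->
  prior_consistency muX p pdata q /\ forall x, marg_x muZ p x = pdata x.
Proof.
move=> L Q; have P := likelihood_posterior_prior_consistency L Q.
by split=> //; exact: (likelihood_prior_consistency L P).2.
Qed.

Let g x := (marg_x muZ p x - pdata x) / pdata x.

Let measurable_g : measurable_fun setT g.
Proof.
apply: measurable_funM; first exact: measurable_funB measurable_marg_x mpdata.
by apply: measurable_funV_ge0 => // x; rewrite ltW.
Qed.

Lemma g_q_x_given_z : posterior_consistency muZ p q -> forall x z,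
  (g x * q_x_given_z muX pdata q x z)%:E =
  (((p x z)%:E - (pdata x * q x z)%:E) * ((q_z muX pdata q z)^-1)%:E)%E.
Proof.
move=> Q x z; rewrite -EFinB -EFinM; congr EFin.
rewrite /g /q_x_given_z /q_joint posterior_consistency_factor //.
have := lt0r_neq0 (pdata_gt0 x); have := lt0r_neq0 (q_z_gt0 z).
by move=> qz_neq0 pdata_neq0; field; rewrite qz_neq0 pdata_neq0.
Qed.

Lemma integrable_g_q_x_given_z : posterior_consistency muZ p q -> forall z,
  muX.-integrable setT (fun x => (g x * q_x_given_z muX pdata q x z)%:E).
Proof.
move=> Q z.
apply: (eq_integrable _ _ _ (fun x _ => esym (g_q_x_given_z Q x z))) => //.
exact/integrableZr/integrableB.
Qed.

Lemma integral_g_q_x_given_z :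
  posterior_consistency muZ p q -> prior_consistency muX p pdata q ->
  forall z, (\int[muX]_x (g x * q_x_given_z muX pdata q x z)%:E = 0)%E.
Proof.
move=> Q P z; under eq_integral do rewrite g_q_x_given_z //.
rewrite integralZr //; last exact: integrableB.
rewrite (integralB_EFin measurableT (p_z_int z) (q_joint_int z)).
rewrite integral_marg_z integral_q_z P.
by rewrite -EFinB subrr mul0e.
Qed.

Lemma posterior_prior_marg_x_ae :
  posterior_consistency muZ p q -> prior_consistency muX p pdata q ->
  complete_family muX (q_x_given_z muX pdata q) ->
  {ae muX, forall x, marg_x muZ p x = pdata x}.
Proof.
move=> Q P C; have := C g measurable_g (integrable_g_q_x_given_z Q).
move=> /(_ (integral_g_q_x_given_z Q P)); apply: filterS => x /eqP.
by rewrite mulf_eq0 invr_eq0 (gt_eqF (pdata_gt0 x)) orbF subr_eq0 => /eqP.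
Qed.

Lemma posterior_prior_consistency :
  posterior_consistency muZ p q -> prior_consistency muX p pdata q ->
  complete_family muX (q_x_given_z muX pdata q) ->
  {ae muX, forall x, marg_x muZ p x = pdata x} /\
  forall z, {ae muX, forall x,
    cond_x_given_z muX p x z = q_x_given_z muX pdata q x z}.
Proof.
move=> Q P C; have pxE := posterior_prior_marg_x_ae Q P C.
split=> // z; apply: filterS pxE => x px_eq.
rewrite /cond_x_given_z /q_x_given_z /q_joint.
by rewrite posterior_consistency_factor // px_eq P.
Qed.

End densities.

Theorem corollary1 (R : realType) (dX dZ : measure_display)
  (X : measurableType dX) (Z : measurableType dZ)
  (muX : {sigma_finite_measure set X -> \bar R})
  (muZ : {sigma_finite_measure set Z -> \bar R})
  (p : X -> Z -> R) (pdata : X -> R) (q : X -> Z -> R) :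
  (* p_theta(x,z) is a strictly positive probability density on X * Z *)
  measurable_fun setT (fun xz : X * Z => p xz.1 xz.2) ->
  (forall x z, 0 < p x z) ->
  (\int[muX \x muZ]_xz (p xz.1 xz.2)%:E = 1)%E ->
  (* its marginals are (finite) real numbers *)
  (forall x, muZ.-integrable setT (fun z => (p x z)%:E)) ->
  (forall z, muX.-integrable setT (fun x => (p x z)%:E)) ->
  (* p_data is a strictly positive probability density on X *)
  measurable_fun setT pdata ->
  (forall x, 0 < pdata x) ->
  (\int[muX]_x (pdata x)%:E = 1)%E ->
  (* q x z = q_phi(z|x) is a strictly positive conditional density on Z *)
  measurable_fun setT (fun xz : X * Z => q xz.1 xz.2) ->
  (forall x z, 0 < q x z) ->
  (forall x, \int[muZ]_z (q x z)%:E = 1)%E ->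
  (* q_phi(z) is a (finite) real number *)
  (forall z, muX.-integrable setT (fun x => (pdata x * q x z)%:E)) ->
  (* 1. (L) and (P) imply (Q) and p_theta(x) = p_data(x) *)
  (likelihood_consistency muX p pdata q -> prior_consistency muX p pdata q ->
     posterior_consistency muZ p q /\ forall x, marg_x muZ p x = pdata x) /\
  (* 2. (L) and (Q) imply (P) and p_theta(x) = p_data(x) *)
  (likelihood_consistency muX p pdata q -> posterior_consistency muZ p q ->
     prior_consistency muX p pdata q /\ forall x, marg_x muZ p x = pdata x) /\
  (* 3. (Q), (P) and completeness imply p_theta = p_data a.e. and (L) (a.e. in x) *)
  (posterior_consistency muZ p q -> prior_consistency muX p pdata q ->
     complete_family muX (q_x_given_z muX pdata q) ->
     {ae muX, forall x, marg_x muZ p x = pdata x} /\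
     forall z, {ae muX, forall x, cond_x_given_z muX p x z = q_x_given_z muX pdata q x z}).
Proof.
move=> mp p_gt0 p_int1 p_x_int p_z_int mpdata pdata_gt0 pdata_int1.
move=> mq q_gt0 q_int1 q_joint_int.
split; first exact: likelihood_prior_consistency.
split; first exact: likelihood_posterior_consistency.
exact: posterior_prior_consistency.
Qed.
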